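(* If $R \in \mathcal{R}$, then (1) $R \subseteq \mathcal{N}$, and (2) $R$ contains every $\lambda$-variable.
   Context: With disjoint sets of $\lambda$-variables $x,y,\dots$ and $\mu$-variables $a,b,\dots$, terms and $\mathcal{E}$-terms are $\mathcal{T} ::= x \mid \lambda x.\mathcal{T} \mid (\mathcal{T}\;\mathcal{E}) \mid \langle \mathcal{T},\mathcal{T}\rangle \mid \omega_1\mathcal{T} \mid \omega_2\mathcal{T} \mid \mu a.\mathcal{T} \mid (a\;\mathcal{T})$, $\mathcal{E} ::= \mathcal{T} \mid \pi_1 \mid \pi_2 \mid [x.\mathcal{T}, y.\mathcal{T}]$ (up to renaming of bound variables). The one-step reduction $\triangleright$ is the closure under all constructors of: $(\lambda x.u\;v)\triangleright u[x:=v]$; $(\langle t_1,t_2\rangle\;\pi_i)\triangleright t_i$; $(\omega_i t\;[x_1.u_1,x_2.u_2])\triangleright u_i[x_i:=t]$; $((t\;[x_1.u_1,x_2.u_2])\;\varepsilon)\triangleright(t\;[x_1.(u_1\;\varepsilon),x_2.(u_2\;\varepsilon)])$; $(\mu a.t\;\varepsilon)\triangleright\mu a.t[a:=^*\varepsilon]$, where $t[a:=^*\varepsilon]$ replaces inductively each subterm $(a\;v)$ by $(a\;(v\;\varepsilon))$. $\mathcal{N}$ is the set of strongly normalizable terms (no infinite $\triangleright$-reduction sequence). For sets $K,L$ of terms define: $K\to L=\{t\in\mathcal{T} : (t\;u)\in L \text{ for all } u\in K\}$; $K\wedge L=\{t\in\mathcal{T} : (t\;\pi_1)\in K \text{ and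 } (t\;\pi_2)\in L\}$; $K\vee L=\{t\in\mathcal{T} :$ for all $\lambda$-variables $x,y$ and all $u,v\in\mathcal{N}$, if $u[x:=r]\in\mathcal{N}$ and $v[y:=s]\in\mathcal{N}$ for all $r\in K$, $s\in L$, then $(t\;[x.u,y.v])\in\mathcal{N}\}$. The set $\mathcal{R}$ of reducibility candidates is the smallest set of sets of terms containing $\mathcal{N}$ and closed under $\to$, $\wedge$, $\vee$. *)

(* Two independent de Bruijn index spaces: lambda-variables (Var n, bound by
   Lam and by the two branches of Case) and mu-variables (MApp a t, bound by Mu). *)
From Stdlib Require Import Arith.

Inductive term : Type :=
| Var  : nat -> term
| Lam  : term -> term
| App  : term -> eterm -> term
| Pair : term -> term -> term
| Inj1 : term -> term
| Inj2 : term -> term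
| Mu   : term -> term
| MApp : nat -> term -> term
with eterm : Type :=
| ETm   : term -> eterm
| Proj1 : eterm
| Proj2 : eterm
| Case  : term -> term -> eterm.     (* [x.u, y.v] : binds one lambda-var in each *)

Definition up (r : nat -> nat) : nat -> nat :=
  fun n => match n with 0 => 0 | S n => S (r n) end.

Fixpoint ren (xr mr : nat -> nat) (t : term) : term :=
  match t with
  | Var n => Var (xr n)
  | Lam t => Lam (ren (up xr) mr t)
  | App t e => App (ren xr mr t) (eren xr mr e)
  | Pair t1 t2 => Pair (ren xr mr t1) (ren xr mr t2)
  | Inj1 t => Inj1 (ren xr mr t)
  | Inj2 t => Inj2 (ren xr mr t)
  | Mu t => Mu (ren xr (up mr) t)
  | MApp a t => MApp (mr a) (ren xr mr t)
  end
with eren (xr mr : nat -> nat) (e : eterm) : eterm :=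
  match e with
  | ETm t => ETm (ren xr mr t)
  | Proj1 => Proj1
  | Proj2 => Proj2
  | Case u v => Case (ren (up xr) mr u) (ren (up xr) mr v)
  end.

Definition lshift (t : term) : term := ren S (fun n => n) t.
Definition mshift (t : term) : term := ren (fun n => n) S t.
Definition elshift (e : eterm) : eterm := eren S (fun n => n) e.
Definition emshift (e : eterm) : eterm := eren (fun n => n) S e.

Definition upS (s : nat -> term) : nat -> term :=
  fun n => match n with 0 => Var 0 | S n => lshift (s n) end.

Fixpoint subst (s : nat -> term) (t : term) : term :=
  match t with
  | Var n => s n
  | Lam t => Lam (subst (upS s) t)
  | App t e => App (subst s t) (esubst s e)
  | Pair t1 t2 => Pair (subst s t1) (subst s t2)
  | Inj1 t => Inj1 (subst s t)
  | Inj2 t => Inj2 (subst s t)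
  | Mu t => Mu (subst (fun n => mshift (s n)) t)
  | MApp a t => MApp a (subst s t)
  end
with esubst (s : nat -> term) (e : eterm) : eterm :=
  match e with
  | ETm t => ETm (subst s t)
  | Proj1 => Proj1
  | Proj2 => Proj2
  | Case u v => Case (subst (upS s) u) (subst (upS s) v)
  end.

Definition scons (v : term) : nat -> term :=
  fun n => match n with 0 => v | S n => Var n end.
Definition subst1 (u v : term) : term := subst (scons v) u.

Fixpoint msub (a : nat) (e : eterm) (t : term) : term :=
  match t with
  | Var n => Var n
  | Lam t => Lam (msub a (elshift e) t)
  | App t e' => App (msub a e t) (emsub a e e')
  | Pair t1 t2 => Pair (msub a e t1) (msub a e t2)
  | Inj1 t => Inj1 (msub a e t)
  | Inj2 t => Inj2 (msub a e t)
  | Mu t => Mu (msub (S a) (emshift e) t)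
  | MApp b v => if Nat.eqb b a then MApp b (App (msub a e v) e)
                else MApp b (msub a e v)
  end
with emsub (a : nat) (e : eterm) (e' : eterm) : eterm :=
  match e' with
  | ETm t => ETm (msub a e t)
  | Proj1 => Proj1
  | Proj2 => Proj2
  | Case u v => Case (msub a (elshift e) u) (msub a (elshift e) v)
  end.

Inductive red : term -> term -> Prop :=
| r_beta u v : red (App (Lam u) (ETm v)) (subst1 u v)
| r_pi1 t1 t2 : red (App (Pair t1 t2) Proj1) t1
| r_pi2 t1 t2 : red (App (Pair t1 t2) Proj2) t2
| r_case1 t u1 u2 : red (App (Inj1 t) (Case u1 u2)) (subst1 u1 t)
| r_case2 t u1 u2 : red (App (Inj2 t) (Case u1 u2)) (subst1 u2 t)
| r_comm t u1 u2 e :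
    red (App (App t (Case u1 u2)) e)
        (App t (Case (App u1 (elshift e)) (App u2 (elshift e))))
| r_mu t e : red (App (Mu t) e) (Mu (msub 0 (emshift e) t))
| c_lam t t' : red t t' -> red (Lam t) (Lam t')
| c_appl t t' e : red t t' -> red (App t e) (App t' e)
| c_appr t e e' : ered e e' -> red (App t e) (App t e')
| c_pairl t1 t1' t2 : red t1 t1' -> red (Pair t1 t2) (Pair t1' t2)
| c_pairr t1 t2 t2' : red t2 t2' -> red (Pair t1 t2) (Pair t1 t2')
| c_inj1 t t' : red t t' -> red (Inj1 t) (Inj1 t')
| c_inj2 t t' : red t t' -> red (Inj2 t) (Inj2 t')
| c_mu t t' : red t t' -> red (Mu t) (Mu t')
| c_mapp a t t' : red t t' -> red (MApp a t) (MApp a t')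
with ered : eterm -> eterm -> Prop :=
| c_etm t t' : red t t' -> ered (ETm t) (ETm t')
| c_casel u u' v : red u u' -> ered (Case u v) (Case u' v)
| c_caser u v v' : red v v' -> ered (Case u v) (Case u v').

Definition SN (t : term) : Prop :=
  ~ exists f : nat -> term, f 0 = t /\ forall n, red (f n) (f (S n)).

Definition tset := term -> Prop.

Definition Arr (K L : tset) : tset :=
  fun t => forall u, K u -> L (App t (ETm u)).

Definition Conj (K L : tset) : tset :=
  fun t => K (App t Proj1) /\ L (App t Proj2).

Definition Disj (K L : tset) : tset :=
  fun t => forall u v : term, SN u -> SN v ->
    (forall r, K r -> SN (subst1 u r)) ->
    (forall s, L s -> SN (subst1 v s)) ->
    SN (App t (Case u v)).

Inductive RC : tset -> Prop :=
| RC_N : RC SN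
| RC_arr K L : RC K -> RC L -> RC (Arr K L)
| RC_conj K L : RC K -> RC L -> RC (Conj K L)
| RC_disj K L : RC K -> RC L -> RC (Disj K L).

(* Girard's conditions CR1 and CR3 are proved together by induction on the
   candidate: every candidate is contained in the strongly normalizable terms
   and contains every neutral term, i.e. a variable followed by a spine of
   strongly normalizable arguments and projections.  Neutral terms have no head
   redex, so they stay neutral under reduction and are strongly normalizable as
   soon as their spine is.  Containment in SN for [K -> L], [K /\ L] and
   [K \/ L] follows by eliminating against the variable [0], a projection and
   the case [[x.x, y.y]] respectively, all of which lie in the smaller
   candidates by the neutral-term half of the induction hypothesis. *)
From Stdlib Require Import Classical ClassicalEpsilon.

Definition sn : term -> Prop := Acc (fun t t' => red t' t).

Definition esn : eterm -> Prop := Acc (fun e e' => ered e' e).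

Lemma sn_SN t : sn t -> SN t.
Proof.
  induction 1 as [t _ IH]; intros [f [f0 f_red]].
  apply (IH (f 1)); [rewrite <- f0; apply f_red|].
  exists (fun n => f (S n)); auto.
Qed.

Lemma not_sn_red t : ~ sn t -> exists t', red t t' /\ ~ sn t'.
Proof.
  intros t_nsn; apply NNPP; intros no_step; apply t_nsn; constructor.
  intros t' t_t'; apply NNPP; intros t'_nsn; apply no_step; eauto.
Qed.

(* Dependent choice along [not_sn_red] builds the infinite reduction sequence. *)
Lemma SN_sn t : SN t -> sn t.
Proof.
  intros t_SN; apply NNPP; intros t_nsn; apply t_SN.
  assert (next : forall s : {t | ~ sn t}, {t' | red (proj1_sig s) t' /\ ~ sn t'}).
  { intros [s s_nsn]; apply constructive_indefinite_description, not_sn_red, s_nsn. }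
  pose (step := fun s => exist (fun t => ~ sn t) _ (proj2 (proj2_sig (next s)))).
  exists (fun n => proj1_sig (Nat.iter n step (exist _ t t_nsn))); split; [reflexivity|].
  intros n; exact (proj1 (proj2_sig (next _))).
Qed.

Lemma sn_red t t' : sn t -> red t t' -> sn t'.
Proof. intros [t_acc] t_t'; exact (t_acc t' t_t'). Qed.

Lemma sn_App_inv t e : sn (App t e) -> sn t.
Proof.
  remember (App t e) as s eqn:def_s; intros s_sn; revert t def_s.
  induction s_sn as [s _ IH]; intros t ->; constructor; intros t' t_t'.
  apply (IH (App t' e)); [constructor|]; auto.
Qed.

Lemma esn_ETm u : sn u -> esn (ETm u).
Proof.
  induction 1 as [u _ IH]; constructor; intros e' u_e'.
  inversion u_e'; subst; apply IH; assumption.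
Qed.

Lemma esn_Proj1 : esn Proj1.
Proof. constructor; intros e' H; inversion H. Qed.

Lemma esn_Proj2 : esn Proj2.
Proof. constructor; intros e' H; inversion H. Qed.

Lemma esn_Case u v : sn u -> sn v -> esn (Case u v).
Proof.
  intros u_sn; revert v; induction u_sn as [u _ IHu]; intros v v_sn.
  induction v_sn as [v v_sn IHv]; constructor; intros e' uv_e'.
  inversion uv_e'; subst; [apply IHu; [|constructor]|apply IHv]; auto.
Qed.

Inductive neutral : term -> Prop :=
| neutral_Var x : neutral (Var x)
| neutral_App t u : neutral t -> sn u -> neutral (App t (ETm u))
| neutral_Proj1 t : neutral t -> neutral (App t Proj1)
| neutral_Proj2 t : neutral t -> neutral (App t Proj2).

Lemma neutral_red t t' : neutral t -> red t t' -> neutral t'.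
Proof.
  intros t_ne; revert t'.
  induction t_ne as [x|t u t_ne IHt u_sn|t t_ne IHt|t t_ne IHt];
    intros t' t_t'; inversion t_t'; subst;
    repeat match goal with
    | H : neutral (_ _) |- _ => inversion H; clear H
    | H : ered _ _ |- _ => inversion H; subst; clear H
    end; constructor; eauto using sn_red.
Qed.

(* A neutral head creates no redex with its argument: every reduction of
   [App t e] happens inside [t] or inside [e]. *)
Lemma sn_App_neutral t e : neutral t -> sn t -> esn e -> sn (App t e).
Proof.
  intros t_ne t_sn; revert t_ne e.
  induction t_sn as [t _ IHt]; intros t_ne e e_sn.
  induction e_sn as [e e_acc IHe]; constructor; intros s te_s.
  inversion te_s; subst;
    try solve [inversion t_ne; match goal with H : neutral _ |- _ => inversion H end].
  - apply IHt; [|eapply neutral_red|constructor]; eauto.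
  - apply IHe; assumption.
Qed.

Lemma neutral_sn t : neutral t -> sn t.
Proof.
  induction 1.
  - constructor; intros t' H; inversion H.
  - apply sn_App_neutral, esn_ETm; auto.
  - apply sn_App_neutral; auto using esn_Proj1.
  - apply sn_App_neutral; auto using esn_Proj2.
Qed.

Lemma RC_sn_neutral (R : tset) :
  RC R -> (forall t, R t -> sn t) /\ (forall t, neutral t -> R t).
Proof.
  induction 1 as [|K L _ [K_sn K_ne] _ [L_sn L_ne]
                  |K L _ [K_sn K_ne] _ [L_sn L_ne]
                  |K L _ [K_sn K_ne] _ [L_sn L_ne]]; split.
  - exact SN_sn.
  - intros t t_ne; apply sn_SN, neutral_sn, t_ne.
  - intros t t_R; apply (sn_App_inv t (ETm (Var 0))).
    apply L_sn, t_R, K_ne, neutral_Var.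
  - intros t t_ne u u_K; apply L_ne; constructor; auto.
  - intros t [t1_K _]; apply (sn_App_inv t Proj1), K_sn, t1_K.
  - intros t t_ne; split; [apply K_ne|apply L_ne]; constructor; exact t_ne.
  (* [subst1 (Var 0) r] computes to [r]. *)
  - intros t t_R; apply (sn_App_inv t (Case (Var 0) (Var 0))), SN_sn.
    apply t_R; try (intros r r_R; apply sn_SN); auto;
      apply sn_SN, neutral_sn, neutral_Var.
  - intros t t_ne u v u_SN v_SN _ _; apply sn_SN, sn_App_neutral, esn_Case;
      auto using neutral_sn, SN_sn.
Qed.

Theorem lemma5 (R : tset) (HR : RC R) :
  (forall t : term, R t -> SN t) /\ (forall x : nat, R (Var x)).
Proof.
  destruct (RC_sn_neutral R HR) as [R_sn R_ne]; split.
  - intros t t_R; apply sn_SN, R_sn, t_R.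
  - intros x; apply R_ne, neutral_Var.
Qed.
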